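(* Let $\$$ be a real-linear involution of $W$ that is either complex-linear or anti-linear. Suppose a commutative formal field theory $\mathcal D\subset\mathcal K$ is invariant under $\sigma(L_+^\uparrow)$. Then $\mathcal D$ is invariant under $C_\$\circ\sigma'(g)$ for all $g\in L_+^\downarrow$ if and only if $\mathcal D$ is $\$$-Hermitian.
   Context: Setting: $M$ real of dimension $d\ge3$ with Lorentzian $\eta$; $L_+^\uparrow$ the identity component of the Lorentz group, $L_+^\downarrow$ the determinant-one time-orientation-reversing component, $L_+=L_+^\uparrow\cup L_+^\downarrow$. $L_+(\mathbb C)$ (complex determinant-one isometries of $M^{\mathbb C}$) is identified with the complexification of $L_+^\uparrow$ and contains $L_+$. $\rho$ is a finite-dimensional real representation of $L_+^\uparrow$ on $V$; $\rho'$ is the representation of $L_+$ on $V$ obtained by restricting the holomorphic extension $\rho^{\mathbb C}$ of $\rho$ to $L_+(\mathbb C)$ (it preserves $V$ on $L_+$); $\omega,\omega'$ likewise for a representation $\omega$ of $L_+^\uparrow$ on $M$. $W=\mathrm{Hom}_{\mathbb R}(V,\mathbb C)$; $\mathcal K=\mathcal F(W\otimes_{\mathbb R}TM)$ is the free non-commutative complex algebra on field symbols $\underline\Phi^\lambda_{\xi_1\cdots\xi_n}=\lambda\otimes(\xi_1\otimes\cdots\otimes\xi_n)$. The classical action induced by $\rho,\omega$ acts by complex-linear algebra automorphisms with $\sigma(g)\underline\Phi^\lambda_{\xi_1\cdots\xi_n}=\underline\Phi^{\lambda\circ\rho(g^{-1})}_{\omega(g)\xi_1\cdots\omega(g)\xi_n}$;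 $\sigma$ is that of $L_+^\uparrow$, $\sigma'$ that of $L_+$ induced by $\rho',\omega'$. A commutative formal field theory is $\mathcal D=c^{-1}(\mathcal D_c)$ with $c\colon\mathcal K\to\mathcal F_c(W\otimes_{\mathbb R}TM)$ the quotient to the free commutative complex algebra and $\mathcal D_c$ a complex affine subspace. $S$ is the complex-linear anti-automorphism of $\mathcal K$ fixing field symbols. $C_\$$ is the unique algebra automorphism of $\mathcal K$ (complex-linear or anti-linear as $\$$ is) with $C_\$(\underline\Phi^\lambda_{\xi_1\cdots\xi_n})=\underline\Phi^{\$(\lambda)}_{\xi_1\cdots\xi_n}$; $\dagger_\$=S\circ C_\$$. $\mathcal D$ is $\$$-Hermitian if $\dagger_\$(\mathcal D)\subseteq\mathcal D$. Invariance means mapping $\mathcal D$ into $\mathcal D$. *)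

From HB Require Import structures.
From mathcomp Require Import all_boot all_order all_algebra.
Set Implicit Arguments. Unset Strict Implicit. Unset Printing Implicit Defensive.
Import Order.TTheory GRing.Theory Num.Theory.
Local Open Scope ring_scope.

Section Defs.
(* C plays the role of the complex numbers; its real numbers are the
   elements x with x \is Num.real. *)
Variable C : numClosedFieldType.

(** * Minkowski space M = R^d, eta = diag(1,-1,...,-1), index 0 is time. *)
Section Lorentz.
Variable d : nat.

Definition eta : 'M[C]_d :=
  \matrix_(i, j) (if i == j then (if val i == 0%N then 1 else -1) else 0).

Definition entry00 (A : 'M[C]_d) : C := \sum_(i < d | val i == 0%N) A i i.

Definition real_mx (A : 'M[C]_d) : Prop := forall i j, A i j \is Num.real.

Definition LC (A : 'M[C]_d) : Prop := A^T *m eta *m A = eta /\ \det A = 1.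
Definition Lplus (A : 'M[C]_d) : Prop := LC A /\ real_mx A.
Definition Lup (A : 'M[C]_d) : Prop := Lplus A /\ 0 < entry00 A.
Definition Ldown (A : 'M[C]_d) : Prop := Lplus A /\ entry00 A < 0.

Inductive polyfun : ('M[C]_d -> C) -> Prop :=
| pf_const (c : C) : polyfun (fun _ => c)
| pf_coord (i j : 'I_d) : polyfun (fun A => A i j)
| pf_add f g : polyfun f -> polyfun g -> polyfun (fun A => f A + g A)
| pf_mul f g : polyfun f -> polyfun g -> polyfun (fun A => f A * g A).

(* rhoC : L_+(C) -> GL_m(C) is the holomorphic (= regular, polynomial in the
   matrix entries) extension of a real representation rho of L_+^uparrow on
   R^m: it is a group homomorphism on L_+(C), its entries are polynomial
   functions on L_+(C), and it is real-valued on L_+^uparrow. *)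
Definition holo_ext_rep (m : nat) (rhoC : 'M[C]_d -> 'M[C]_m) : Prop :=
  [/\ rhoC 1%:M = 1%:M,
      (forall g h, LC g -> LC h -> rhoC (g *m h) = rhoC g *m rhoC h),
      (forall i j, exists p, polyfun p /\ forall g, LC g -> p g = rhoC g i j)
    & (forall g, Lup g -> forall i j, rhoC g i j \is Num.real)].

(** * The free algebra K = F(W (x)_R TM), V = R^n, W = Hom_R(V,C) = C^n. *)
Variable n : nat.

(* basis letter (a, [:: i1; ..; ik]) stands for the field symbol
   Phi^{e^a}_{e_i1 ... e_ik}, with e^a the dual basis of V and e_i the
   standard basis of M. These span W (x)_R TM over C. *)
Definition letter := ('I_n * seq 'I_d)%type.

Fixpoint seqs_of_len (k : nat) : seq (seq 'I_d) :=
  if k is k'.+1 then [seq i :: s | i <- enum 'I_d, s <- seqs_of_len k']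
  else [:: [::]].

Definition letters_of_len (k : nat) : seq letter :=
  [seq (b, s) | b <- enum 'I_n, s <- seqs_of_len k].

Fixpoint same_shape (w : seq letter) : seq (seq letter) :=
  if w is x :: w' then [seq y :: v | y <- letters_of_len (size x.2), v <- same_shape w']
  else [:: [::]].

(* Elements of K are represented by their coefficient functions on words
   (basis of the free algebra), which must be finitely supported. *)
Definition kelt := seq letter -> C.
Definition finsupp (f : kelt) : Prop :=
  exists s : seq (seq letter), forall w, w \notin s -> f w = 0.

(* Complex-linear (anti = false) or anti-linear (anti = true) algebra
   endomorphism of K induced by the degree-preserving letter map
   x |-> sum_y T y x . y *)
Definition alg_map (anti : bool) (T : letter -> letter -> C) (f : kelt) : kelt :=
  fun w => \sum_(u <- same_shape w)
             (if anti then (f u)^* else f u) * \prod_(p <- zip w u) T p.1 p.2.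

(* classical action sigma(g) induced by rho, omega:
   sigma(g) Phi^lambda_{xi..} = Phi^{lambda o rho(g^-1)}_{omega(g) xi ..} *)
Definition sigma (rho : 'M[C]_d -> 'M[C]_n) (omega : 'M[C]_d -> 'M[C]_d)
    (g : 'M[C]_d) : kelt -> kelt :=
  alg_map false (fun y x =>
     rho (invmx g) x.1 y.1 * \prod_(p <- zip y.2 x.2) omega g p.1 p.2).

(* C_$ : Phi^lambda_xi |-> Phi^{$ lambda}_xi, with lambda in W = 'rV_n
   (lambda_b = lambda(e_b)) *)
Definition Cdollar (anti : bool) (dollar : 'rV[C]_n -> 'rV[C]_n) : kelt -> kelt :=
  alg_map anti (fun y x => dollar (delta_mx 0 x.1) 0 y.1 * (y.2 == x.2)%:R).

(* S : complex-linear anti-automorphism fixing field symbols *)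
Definition Santi (f : kelt) : kelt := fun w => f (rev w).

Definition dagger anti dollar (f : kelt) : kelt := Santi (Cdollar anti dollar f).

(* c : K -> F_c, quotient to the free commutative algebra; an element of F_c
   is represented by a permutation-invariant finitely supported coefficient
   function on words (i.e. a function on multisets of letters). *)
Definition cmap (f : kelt) : kelt := fun u => \sum_(v <- permutations u) f v.

Definition in_Fc (h : kelt) : Prop :=
  finsupp h /\ forall u v, perm_eq u v -> h u = h v.

Definition affine_subspace_Fc (Dc : kelt -> Prop) : Prop :=
  (forall h, Dc h -> in_Fc h) /\
  (forall h1 h2 (t : C), Dc h1 -> Dc h2 -> Dc (fun u => (1 - t) * h1 u + t * h2 u)).

Definition cfft (Dc : kelt -> Prop) : kelt -> Prop :=
  fun f => finsupp f /\ Dc (cmap f).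

Definition preserves (F : kelt -> kelt) (D : kelt -> Prop) : Prop :=
  forall f, D f -> D (F f).

End Lorentz.
End Defs.

(* For z != 0 let B(z) be the boost of rapidity ln z in the (x^0, x^1)-plane,
   with cosh and sinh replaced by (z + 1/z)/2 and (z - 1/z)/2.  It lies in
   L_+(C), is orthochronous for real z > 0, time-reversing for real z < 0, and
   B(z) B(w) = B(z w).  For fixed h in L_+(C) and f in K, every coefficient of
   sigma(B(z) h) f is a Laurent polynomial in z whose degree is bounded
   independently of the coefficient, because rho and omega are polynomial in
   the matrix entries and B(z)^-1 = eta B(z)^T eta.  A Laurent polynomial of
   degree <= N is an affine combination of its values at any 2N+1 nonzero
   points, and both D and its preimage under C_$ are closed under affine
   combinations.
   If C_$ sigma(g) preserves D for g in L_+^downarrow, interpolating at the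
   points B(-k) gives that C_$ = C_$ sigma(B(1)) preserves D; as S preserves
   every commutative theory, so does dagger_$ = S C_$.  Conversely, for g in
   L_+^downarrow the matrices B(k) B(-1) g are orthochronous, so interpolation
   at z = -1 gives sigma(g) D in D, and C_$ = S dagger_$ preserves D. *)

From Pilot Require Import Defs.
From HB Require Import structures.
From mathcomp Require Import all_boot all_order all_algebra zify ring.
From Stdlib Require Import FunctionalExtensionality.
Set Implicit Arguments. Unset Strict Implicit. Unset Printing Implicit Defensive.
Import Order.TTheory GRing.Theory Num.Theory.
Local Open Scope ring_scope.

Section Laurent.
Variable C : fieldType.

(* [phi] agrees on [C^*] with a Laurent polynomial with exponents in [-N, N]. *)
Definition laurent (N : nat) (phi : C -> C) : Prop :=
  exists q : {poly C}, (size q <= (N + N).+1)%N /\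
    forall z, z != 0 -> phi z * z ^+ N = q.[z].

Lemma laurent_ext N (phi psi : C -> C) :
  laurent N phi -> (forall z, z != 0 -> phi z = psi z) -> laurent N psi.
Proof. by move=> [q [sq hq]] e; exists q; split => // z nz; rewrite -e // hq. Qed.

Lemma laurent_widen N M (phi : C -> C) :
  (N <= M)%N -> laurent N phi -> laurent M phi.
Proof.
move=> leNM [q [sq hq]]; exists (q * 'X^(M - N)); split.
  apply: leq_trans (size_polyMleq _ _) _; rewrite size_polyXn addnS /=.
  move: (size q) sq => k; lia.
by move=> z nz; rewrite hornerM hornerXn -hq // -mulrA -exprD subnKC.
Qed.

Lemma laurent_cst N (c : C) : laurent N (fun=> c).
Proof.
apply: (@laurent_widen 0) => //; exists c%:P; split; first exact: size_polyC_leq1.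
by move=> z _; rewrite expr0 mulr1 hornerC.
Qed.

Lemma laurentD N (phi psi : C -> C) :
  laurent N phi -> laurent N psi -> laurent N (fun z => phi z + psi z).
Proof.
move=> [q [sq hq]] [r [sr hr]]; exists (q + r); split.
  by apply: leq_trans (size_polyD _ _) _; rewrite geq_max sq sr.
by move=> z nz; rewrite hornerD -hq // -hr // mulrDl.
Qed.

Lemma laurentM N M (phi psi : C -> C) :
  laurent N phi -> laurent M psi -> laurent (N + M) (fun z => phi z * psi z).
Proof.
move=> [q [sq hq]] [r [sr hr]]; exists (q * r); split.
  apply: leq_trans (size_polyMleq _ _) _; move: (size q) (size r) sq sr => a b; lia.
by move=> z nz; rewrite hornerM -hq // -hr // exprD; ring.
Qed.

Lemma laurentZ N (c : C) (phi : C -> C) :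
  laurent N phi -> laurent N (fun z => c * phi z).
Proof.
move=> [q [sq hq]]; exists (c *: q); split; first exact: leq_trans (size_scale_leq _ _) _.
by move=> z nz; rewrite hornerZ -hq // mulrA.
Qed.

Lemma laurent_sum N (I : Type) (r : seq I) (P : pred I) (F : I -> C -> C) :
  (forall i, P i -> laurent N (F i)) -> laurent N (fun z => \sum_(i <- r | P i) F i z).
Proof.
move=> hF; elim: r => [|i r IH].
  by apply: (laurent_ext (laurent_cst N 0)) => z _; rewrite big_nil.
case Pi: (P i); last by apply: (laurent_ext IH) => z _; rewrite big_cons Pi.
by apply: (laurent_ext (laurentD (hF i Pi) IH)) => z _; rewrite big_cons Pi.
Qed.

Lemma laurent_prod_zip (A B : Type) (F : A -> B -> C -> C) (deg : B -> nat) :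
  (forall a b, laurent (deg b) (F a b)) -> forall (s : seq A) (t : seq B),
  laurent (\sum_(b <- t) deg b) (fun z => \prod_(p <- zip s t) F p.1 p.2 z).
Proof.
move=> hF; elim=> [|a s IH] [|b t] /=;
  try by apply: (laurent_ext (laurent_cst _ 1)) => z _; rewrite big_nil.
rewrite big_cons; apply: (laurent_ext (laurentM (hF a b) (IH t))) => z _.
by rewrite big_cons.
Qed.

(* Lagrange interpolation of [z^N phi z], a polynomial of size at most [2N+1]. *)
Lemma laurent_interpolation N (x : nat -> C) (z0 : C) :
  injective x -> (forall k, x k != 0) -> z0 != 0 ->
  exists lam : 'I_(N + N).+1 -> C, \sum_i lam i = 1 /\
    forall phi, laurent N phi -> phi z0 = \sum_i lam i * phi (x i).
Proof.
move=> xI xN0 z0N0.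
pose lam (i : 'I_(N + N).+1) :=
  x i ^+ N * (tnth ((N + N).+1.-lagrange x) i).[z0] / z0 ^+ N.
have interp phi : laurent N phi -> phi z0 = \sum_i lam i * phi (x i).
  move=> [q [sq hq]]; apply: (mulIf (expf_neq0 N z0N0)).
  rewrite hq // {1}(lagrange_gen _ xI sq) // horner_sum mulr_suml.
  apply: eq_bigr => i _; rewrite hornerM hornerC -hq // /lam.
  by field; apply: expf_neq0.
exists lam; split => //.
by rewrite [RHS](interp _ (laurent_cst N 1)); apply: eq_bigr => i _; rewrite mulr1.
Qed.

End Laurent.

Section AffineClosed.
Variables (C : numFieldType) (T : Type).

Definition affine_closed (P : (T -> C) -> Prop) : Prop :=
  forall h1 h2 t, P h1 -> P h2 -> P (fun u => (1 - t) * h1 u + t * h2 u).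

Variable P : (T -> C) -> Prop.
Hypothesis affP : affine_closed P.

Lemma affine_closed_shift (I : Type) (V : I -> T -> C) (v0 : T -> C)
    (r : seq I) (mu : I -> C) :
  P v0 -> (forall i, P (V i)) ->
  P (fun w => v0 w + \sum_(i <- r) mu i * (V i w - v0 w)).
Proof.
move=> Pv0 PV; elim: r mu => [|i r IH] mu.
  by under [fun w => _]functional_extensionality do rewrite big_nil addr0.
(* the midpoint of [v0 + 2 mu_i (V_i - v0)] and [v0 + 2 sum_r mu (V - v0)] *)
have := affP (2^-1) (IH (fun j => 2 * mu j)) (affP (2 * mu i) Pv0 (PV i)).
have h2 : (2 : C) != 0 by rewrite pnatr_eq0.
congr P; apply: functional_extensionality => w; rewrite big_cons.
rewrite -[in RHS](mulKf h2 (\sum_(j <- r) _)) mulr_sumr.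
under [in RHS]eq_bigr do rewrite mulrA.
by field.
Qed.

Lemma affine_closed_sum (I : Type) (V : I -> T -> C) (r : seq I) (lam : I -> C) :
  (forall i, P (V i)) -> \sum_(i <- r) lam i = 1 ->
  P (fun w => \sum_(i <- r) lam i * V i w).
Proof.
case: r => [|i r] PV; first by rewrite big_nil => /eqP; rewrite eq_sym oner_eq0.
rewrite big_cons => /(canRL (addrK _)) lam_i.
have := affine_closed_shift r lam (PV i) PV.
congr P; apply: functional_extensionality => w.
rewrite big_cons lam_i mulrBl mul1r mulr_suml -addrA; congr (_ + _).
by rewrite -sumrN -big_split; apply: eq_bigr => j _ /=; ring.
Qed.

Lemma affine_closed_laurent N (x : nat -> C) (V : C -> T -> C) (z0 : C) :
  injective x -> (forall k, x k != 0) -> z0 != 0 ->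
  (forall w, laurent N (fun z => V z w)) -> (forall k, P (V (x k))) -> P (V z0).
Proof.
move=> xI xN0 z0N0 LV PV.
have [lam [lam1 interp]] := laurent_interpolation N xI xN0 z0N0.
have := affine_closed_sum (fun i : 'I_(N + N).+1 => PV i) lam1.
by congr P; apply: functional_extensionality => w; rewrite (interp _ (LV w)).
Qed.

End AffineClosed.

Section LorentzGroup.
Variables (C : numClosedFieldType) (d : nat).
Local Notation etad := (Defs.eta C d).

Lemma LC1 : LC (1%:M : 'M[C]_d).
Proof. by split; rewrite ?trmx1 ?mul1mx ?mulmx1 ?det1. Qed.

Lemma LC_mul (A B : 'M[C]_d) : LC A -> LC B -> LC (A *m B).
Proof.
move=> [hA dA] [hB dB]; split; last by rewrite det_mulmx dA dB mulr1.
by rewrite trmx_mul !mulmxA -(mulmxA B^T) -(mulmxA B^T) hA hB.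
Qed.

Lemma real_mx_mul (A B : 'M[C]_d) : real_mx A -> real_mx B -> real_mx (A *m B).
Proof. by move=> hA hB i j; rewrite mxE; apply: rpred_sum => k _; apply: rpredM. Qed.

Lemma eta_sq : etad *m etad = 1%:M.
Proof.
apply/matrixP => i j; rewrite mxE (bigD1 i) //= big1 ?addr0 => [|k ki].
  rewrite !mxE eqxx; case: (eqVneq i j) => _; last by rewrite mulr0.
  by case: ifP; rewrite ?mulrNN mulr1.
by rewrite !mxE eq_sym (negbTE ki) mul0r.
Qed.

Lemma tr_eta : etad^T = etad.
Proof. by apply/matrixP => i j; rewrite !mxE eq_sym; case: eqP => // ->. Qed.

Lemma LC_invmx (A : 'M[C]_d) : LC A ->
  invmx A = etad *m A^T *m etad /\ LC (etad *m A^T *m etad).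
Proof.
move=> [hA dA].
have AE : etad *m A^T *m etad *m A = 1%:M.
  by rewrite -!mulmxA (mulmxA A^T) hA eta_sq.
have EA : A *m (etad *m A^T *m etad) = 1%:M by apply: mulmx1C.
have uA : A \in unitmx by case: (mulmx1_unit EA).
have AEA : A *m etad *m A^T = etad by rewrite -[RHS]mul1mx -EA -!mulmxA eta_sq mulmx1.
split; first by rewrite -[LHS]mulmx1 -EA (mulmxA (invmx A)) mulVmx // mul1mx.
split; last by rewrite !det_mulmx det_tr dA mulr1 -det_mulmx eta_sq det1.
rewrite !trmx_mul tr_eta trmxK -!mulmxA (mulmxA etad etad) eta_sq mul1mx.
by rewrite (mulmxA A) (mulmxA (A *m etad)) AEA eta_sq mulmx1.
Qed.

End LorentzGroup.

Lemma sum_ord2 (R : nmodType) (F : 'I_2 -> R) : \sum_i F i = F 0 + F 1.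
Proof. by rewrite !big_ord_recl big_ord0 addr0; congr (_ + F _); apply: val_inj. Qed.

Lemma det_mx22 (R : comNzRingType) (A : 'M[R]_2) :
  \det A = A 0 0 * A 1 1 - A 0 1 * A 1 0.
Proof.
rewrite (expand_det_row _ 0) sum_ord2 /cofactor !det_mx11 !mxE /=.
have -> : lift 0 0 = 1 :> 'I_2 by apply: val_inj.
have -> : lift 1 0 = 0 :> 'I_2 by apply: val_inj.
by rewrite expr0 expr1; ring.
Qed.

Local Ltac mx22 :=
  apply/matrixP => - [[|[|//]] ?] [[|[|//]] ?]; rewrite !(mxE, sum_ord2) /=.

Lemma real_gt0_of_mul_add (R : numDomainType) (x y : R) :
  x \is Num.real -> y \is Num.real -> 0 < x * y -> 0 < x + y -> 0 < x.
Proof.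
move=> rx ry xy_gt0 xDy_gt0; case/orP: (real_leVge rx (real0 R)) => x_le0; last first.
  by rewrite lt_def x_le0 andbT; apply: contraTneq xy_gt0 => ->; rewrite mul0r ltxx.
case/orP: (real_leVge ry (real0 R)) => y_le0.
  by have := lt_le_trans xDy_gt0 (lerD x_le0 y_le0); rewrite addr0 ltxx.
by have := lt_le_trans xy_gt0 (mulr_le0_ge0 x_le0 y_le0); rewrite ltxx.
Qed.

Section Boost.
Variables (C : numClosedFieldType) (d' : nat).
Local Notation etad := (Defs.eta C (2 + d')).

Definition ch (z : C) : C := (z + z^-1) / 2.
Definition sh (z : C) : C := (z - z^-1) / 2.

Definition boost2 (z : C) : 'M[C]_2 := \matrix_(i, j) if i == j then ch z else sh z.

Definition boost (z : C) : 'M[C]_(2 + d') := block_mx (boost2 z) 0 0 1%:M.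

Let two_neq0 : (2 : C) != 0. Proof. by rewrite pnatr_eq0. Qed.

Lemma boost2M (z w : C) : z != 0 -> w != 0 -> boost2 z *m boost2 w = boost2 (z * w).
Proof. by move=> z0 w0; mx22; rewrite /ch /sh ?invfM; field; rewrite z0 w0. Qed.

Lemma boost2_1 : boost2 1 = 1%:M.
Proof. by mx22; rewrite /ch /sh invr1; field. Qed.

Lemma tr_boost2 (z : C) : (boost2 z)^T = boost2 z.
Proof. by mx22. Qed.

Lemma boost2_eta (z : C) :
  z != 0 -> boost2 z *m Defs.eta C 2 *m boost2 z = Defs.eta C 2.
Proof.
by move=> z0; mx22; rewrite ?mulr0 ?mul0r ?addr0 ?add0r ?mulr1 ?mul1r /ch /sh; field.
Qed.

Lemma det_boost2 (z : C) : z != 0 -> \det (boost2 z) = 1.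
Proof. by move=> z0; rewrite det_mx22 !mxE /= /ch /sh; field. Qed.

Lemma eta_block : etad = block_mx (Defs.eta C 2) 0 0 (- 1%:M).
Proof.
apply/matrixP => i j; rewrite -(splitK i) -(splitK j).
case: (split i) (split j) => [i'|i'] [j'|j'] /=.
- by rewrite block_mxEul !mxE eq_lshift.
- by rewrite block_mxEur !mxE eq_lrshift.
- by rewrite block_mxEdl !mxE eq_rlshift.
- rewrite block_mxEdr !mxE eq_rshift /=.
  by case: (i' == j'); rewrite ?mulr0n ?oppr0.
Qed.

Lemma boostM (z w : C) : z != 0 -> w != 0 -> boost z *m boost w = boost (z * w).
Proof.
move=> z0 w0; rewrite /boost mulmx_block !mulmx0 !mul0mx !addr0 !add0r mul1mx.
by rewrite boost2M.
Qed.

Lemma boost1 : boost 1 = 1%:M.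
Proof. by rewrite /boost boost2_1 -scalar_mx_block. Qed.

Lemma boostN1K (g : 'M[C]_(2 + d')) : boost (-1) *m (boost (-1) *m g) = g.
Proof.
have N1_neq0 : (-1 : C) != 0 by rewrite oppr_eq0 oner_eq0.
by rewrite mulmxA boostM // mulN1r opprK boost1 mul1mx.
Qed.

Lemma boost_LC (z : C) : z != 0 -> LC (boost z).
Proof.
move=> z0; split; last by rewrite det_ublock det_boost2 // det1 mulr1.
rewrite eta_block /boost tr_block_mx tr_boost2 !trmx0 trmx1.
rewrite !mulmx_block !mulmx0 !mul0mx !addr0 !add0r boost2_eta //.
by rewrite !mul0mx mul1mx mulmx1.
Qed.

Local Notation t0 := (lshift d' (0 : 'I_2)).
Local Notation x1 := (lshift d' (1 : 'I_2)).

Lemma entry00E (A : 'M[C]_(2 + d')) : entry00 A = A t0 t0.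
Proof.
rewrite /entry00 big_split_ord /= [X in _ + X]big_pred0 // addr0.
by rewrite (big_pred1 (0 : 'I_2)) // => -[[|[|//]] ?].
Qed.

Lemma boost_mul00 (z : C) (A : 'M[C]_(2 + d')) :
  (boost z *m A) t0 t0 = ch z * A t0 t0 + sh z * A x1 t0.
Proof.
rewrite mxE big_split_ord /= [X in _ + X]big1 ?addr0 => [|i _].
  by rewrite sum_ord2 /boost !block_mxEul !mxE.
by rewrite /boost block_mxEur mxE mul0r.
Qed.

(* The time-time component of [A^T eta A = eta]: A00^2 - A10^2 - ... = 1. *)
Lemma LC_real_time_norm (A : 'M[C]_(2 + d')) : LC A -> real_mx A ->
  1 <= A t0 t0 * A t0 t0 - A x1 t0 * A x1 t0.
Proof.
move=> [AetaA _] rA.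
have At_eta k : (A^T *m etad) t0 k = A k t0 * (if val k == 0%N then 1 else -1).
  rewrite mxE (bigD1 k) //= big1 ?addr0 => [|l lk]; first by rewrite !mxE eqxx.
  by rewrite !mxE ifN ?mulr0.
have /matrixP/(_ t0 t0) := AetaA; rewrite mxE; under eq_bigr do rewrite At_eta.
rewrite big_split_ord sum_ord2 !mxE /= mulr1 mulrN1 mulNr => <-.
rewrite -[X in _ <= X]addr0 lerD // -oppr_ge0 -sumrN; apply: sumr_ge0 => i _.
by rewrite mulrN1 mulNr opprK -expr2 -realEsqr.
Qed.

Lemma ch_sh_comb_gt0 (z a b : C) :
  0 < z -> a \is Num.real -> b \is Num.real -> 0 < a -> 1 <= a * a - b * b ->
  0 < ch z * a + sh z * b.
Proof.
move=> z_gt0 ra rb a_gt0 ab_ge1.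
have prod_gt0 : 0 < (a + b) * (a - b).
  have -> : (a + b) * (a - b) = a * a - b * b by ring.
  exact: lt_le_trans ltr01 ab_ge1.
have sum_gt0 : 0 < (a + b) + (a - b) by rewrite addrACA subrr addr0 addr_gt0.
have aDb_gt0 := real_gt0_of_mul_add (rpredD ra rb) (rpredB ra rb) prod_gt0 sum_gt0.
have aBb_gt0 : 0 < a - b.
  apply: (real_gt0_of_mul_add (rpredB ra rb) (rpredD ra rb)).
  - by rewrite mulrC.
  - by rewrite addrC.
have -> : ch z * a + sh z * b = (z * (a + b) + z^-1 * (a - b)) / 2.
  by rewrite /ch /sh; ring.
by rewrite divr_gt0 ?ltr0n // addr_gt0 // mulr_gt0 // invr_gt0.
Qed.

Lemma real_boost (z : C) : z \is Num.real -> real_mx (boost z).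
Proof.
move=> rz i j; rewrite -(splitK i) -(splitK j) /boost.
case: (split i) (split j) => [i'|i'] [j'|j'] /=;
  rewrite ?block_mxEul ?block_mxEur ?block_mxEdl ?block_mxEdr !mxE ?rpred0 ?realn //.
by case: ifP => _; rewrite realM ?realD ?realN ?realV ?realn.
Qed.

Lemma Lup_boostMl (z : C) (h : 'M[C]_(2 + d')) :
  0 < z -> Lup h -> Lup (boost z *m h).
Proof.
move=> z_gt0 [[Lh rh] h_gt0]; rewrite entry00E in h_gt0.
split; first split.
- exact: LC_mul (boost_LC (lt0r_neq0 z_gt0)) Lh.
- by apply: real_mx_mul rh; apply: real_boost; rewrite realE ltW.
by rewrite entry00E boost_mul00 ch_sh_comb_gt0 // ?LC_real_time_norm.
Qed.

Lemma Lup_boostN1Ml (g : 'M[C]_(2 + d')) : Ldown g -> Lup (boost (-1) *m g).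
Proof.
move=> [[Lg rg] g_lt0]; rewrite entry00E in g_lt0.
split; first split.
- by apply: LC_mul Lg; apply: boost_LC; rewrite oppr_eq0 oner_eq0.
- by apply: real_mx_mul rg; apply: real_boost; rewrite rpredN real1.
rewrite entry00E boost_mul00.
have -> : ch (-1) = -1 by rewrite /ch invrN invr1; field.
have -> : sh (-1) = 0 by rewrite /sh invrN invr1 subrr mul0r.
by rewrite mul0r addr0 mulN1r oppr_gt0.
Qed.

Lemma Ldown_boost (z : C) : z < 0 -> Ldown (boost z).
Proof.
move=> z_lt0; split; first split.
- by apply: boost_LC; rewrite ltr0_neq0.
- by apply: real_boost; rewrite realE (ltW z_lt0) orbT.
rewrite entry00E /boost block_mxEul mxE eqxx /ch.
by rewrite pmulr_llt0 ?invr_gt0 ?ltr0n // -oppr_gt0 opprD addr_gt0 // oppr_gt0 ?invr_lt0.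
Qed.

Lemma laurent_ch : laurent 1 ch.
Proof.
exists (2^-1 *: ('X^2 + 1)); split.
  apply: leq_trans (size_scale_leq _ _) _.
  by apply: leq_trans (size_polyD _ _) _; rewrite size_polyXn size_poly1.
by move=> z z0; rewrite hornerZ hornerD hornerXn hornerC /ch expr1; field.
Qed.

Lemma laurent_sh : laurent 1 sh.
Proof.
exists (2^-1 *: ('X^2 - 1)); split.
  apply: leq_trans (size_scale_leq _ _) _.
  by apply: leq_trans (size_polyD _ _) _; rewrite size_polyN size_polyXn size_poly1.
by move=> z z0; rewrite hornerZ hornerD hornerN hornerXn hornerC /sh expr1; field.
Qed.

Lemma laurent_boost (i j : 'I_(2 + d')) : laurent 1 (fun z => boost z i j).
Proof.
rewrite -(splitK i) -(splitK j) /boost.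
case: (split i) (split j) => [i'|i'] [j'|j'] /=.
- apply: (laurent_ext (_ : laurent 1 (fun z => if i' == j' then ch z else sh z))).
    by case: (i' == j'); [apply: laurent_ch | apply: laurent_sh].
  by move=> z _; rewrite block_mxEul mxE.
- by apply: (laurent_ext (laurent_cst 1 0)) => z _; rewrite block_mxEur mxE.
- by apply: (laurent_ext (laurent_cst 1 0)) => z _; rewrite block_mxEdl mxE.
- by apply: (laurent_ext (laurent_cst 1 (i' == j')%:R)) => z _; rewrite block_mxEdr mxE.
Qed.

End Boost.

Section LaurentMatrices.
Variables (C : numClosedFieldType) (d : nat).

Lemma laurent_mulmxr N (A : C -> 'M[C]_d) (K : 'M[C]_d) :
  (forall i j, laurent N (fun z => A z i j)) ->
  forall i j, laurent N (fun z => (A z *m K) i j).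
Proof.
move=> LA i j; apply: (laurent_ext (_ : laurent N (fun z => \sum_k K k j * A z i k))).
  by apply: laurent_sum => k _; apply: laurentZ.
by move=> z _; rewrite mxE; apply: eq_bigr => k _; rewrite mulrC.
Qed.

Lemma laurent_mulmxl N (A : C -> 'M[C]_d) (K : 'M[C]_d) :
  (forall i j, laurent N (fun z => A z i j)) ->
  forall i j, laurent N (fun z => (K *m A z) i j).
Proof.
move=> LA i j; apply: (laurent_ext (_ : laurent N (fun z => \sum_k K i k * A z k j))).
  by apply: laurent_sum => k _; apply: laurentZ.
by move=> z _; rewrite mxE.
Qed.

Lemma laurent_trmx N (A : C -> 'M[C]_d) :
  (forall i j, laurent N (fun z => A z i j)) ->
  forall i j, laurent N (fun z => (A z)^T i j).
Proof. by move=> LA i j; apply: (laurent_ext (LA j i)) => z _; rewrite mxE. Qed.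

Lemma laurent_polyfun (p : 'M[C]_d -> C) : polyfun p ->
  exists N, forall A : C -> 'M[C]_d, (forall i j, laurent 1 (fun z => A z i j)) ->
    laurent N (fun z => p (A z)).
Proof.
elim=> [c | i j | f g _ [N1 Lf] _ [N2 Lg] | f g _ [N1 Lf] _ [N2 Lg]].
- by exists 0%N => A _; apply: laurent_cst.
- by exists 1%N => A LA; apply: LA.
- exists (maxn N1 N2) => A LA; apply: laurentD.
    exact: laurent_widen (leq_maxl _ _) (Lf A LA).
  exact: laurent_widen (leq_maxr _ _) (Lg A LA).
- by exists (N1 + N2)%N => A LA; apply: laurentM; [apply: Lf | apply: Lg].
Qed.

Lemma exists_common_bound (I : finType) (P : I -> nat -> Prop) :
  (forall i N M, (N <= M)%N -> P i N -> P i M) ->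
  (forall i, exists N, P i N) -> exists N, forall i, P i N.
Proof.
move=> Pwiden PI; suff [N PN] : exists N, forall i, i \in enum I -> P i N.
  by exists N => i; apply: PN; rewrite mem_enum.
elim: (enum I) => [|i s [N PN]]; first by exists 0%N.
have [M PM] := PI i; exists (maxn N M) => j; rewrite inE => /predU1P [-> | js].
  exact: Pwiden (leq_maxr _ _) PM.
exact: Pwiden (leq_maxl _ _) (PN j js).
Qed.

Lemma laurent_holo_entries m (F : 'M[C]_d -> 'M[C]_m) (A B : C -> 'M[C]_d) :
  (forall i j, exists p, polyfun p /\ forall g, LC g -> p g = F g i j) ->
  (forall i j, laurent 1 (fun z => B z i j)) ->
  (forall z, z != 0 -> A z = B z /\ LC (B z)) ->
  exists N, forall i j, laurent N (fun z => F (A z) i j).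
Proof.
move=> Fpoly LB AB.
have [|[i j]|N LN] := @exists_common_bound ('I_m * 'I_m)%type
  (fun ij N => laurent N (fun z => F (A z) ij.1 ij.2)).
- by move=> ij N M; apply: laurent_widen.
- have [p [pp Fp]] := Fpoly i j; have [N LN] := laurent_polyfun pp.
  exists N; apply: (laurent_ext (LN _ LB)) => z z0.
  by have [-> LBz] := AB z z0; rewrite Fp.
- by exists N => i j; apply: (LN (i, j)).
Qed.

End LaurentMatrices.

Section SigmaLaurent.
Variables (C : numClosedFieldType) (d' n : nat).
Variables (rho : 'M[C]_(2 + d') -> 'M[C]_n) (omega : 'M[C]_(2 + d') -> 'M[C]_(2 + d')).
Hypotheses (hrho : holo_ext_rep rho) (homega : holo_ext_rep omega).
Local Notation etad := (Defs.eta C (2 + d')).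

(* The bound is uniform in the word [w]: a coefficient of [sigma g f] at [w] only
   involves the finitely many words [u] in the support of [f], each contributing
   a product of [size u] entries of [rho] and [omega]. *)
Lemma sigma_boost_laurent (h : 'M[C]_(2 + d')) (f : kelt C (2 + d') n) :
  LC h -> finsupp f ->
  exists N, forall w, laurent N (fun z => sigma rho omega (boost d' z *m h) f w).
Proof.
move=> Lh [s fs].
pose M z := boost d' z *m h.
have LM : forall i j, laurent 1 (fun z => M z i j).
  by apply: laurent_mulmxr; apply: laurent_boost.
have LCM z : z != 0 -> LC (M z) by move=> z0; apply: LC_mul (boost_LC _ z0) Lh.
case: hrho => _ _ rho_poly _; case: homega => _ _ omega_poly _.
have [Nr Lrho] : exists N, forall i j, laurent N (fun z => rho (invmx (M z)) i j).
  apply: (laurent_holo_entries rho_poly (B := fun z => etad *m (M z)^T *m etad)).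
    by apply: laurent_mulmxr; apply: laurent_mulmxl; apply: laurent_trmx.
  by move=> z z0; apply: LC_invmx; apply: LCM.
have [No Lomega] : exists N, forall i j, laurent N (fun z => omega (M z) i j).
  by apply: (laurent_holo_entries omega_poly LM) => z z0; split => //; apply: LCM.
pose deg (x : letter (2 + d') n) := (Nr + \sum_(b <- x.2) No)%N.
pose deg_word (u : seq (letter (2 + d') n)) := \sum_(x <- u) deg x.
exists (\max_(u <- s) deg_word u) => w; apply: laurent_sum => u _.
have [fu0|fu_neq0] := eqVneq (f u) 0.
  by apply: (laurent_ext (laurent_cst _ 0)) => z _; rewrite fu0 mul0r.
have us : u \in s by apply: contraNT fu_neq0 => /fs ->.
apply: (laurent_widen (@leq_bigmax_seq _ s xpredT deg_word u us isT)).
apply: laurentZ.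
pose F (y x : letter (2 + d') n) z :=
  rho (invmx (M z)) x.1 y.1 * \prod_(q <- zip y.2 x.2) omega (M z) q.1 q.2.
apply: (@laurent_prod_zip _ _ _ F deg) => y x; apply: laurentM; first exact: Lrho.
exact: (@laurent_prod_zip _ _ _ (fun a b z => omega (M z) a b) (fun=> No)).
Qed.

Lemma sigma_boost_interpolation (P : kelt C (2 + d') n -> Prop)
    (h : 'M[C]_(2 + d')) (f : kelt C (2 + d') n) (eps z0 : C) :
  affine_closed P -> LC h -> finsupp f -> eps != 0 -> z0 != 0 ->
  (forall k : nat, P (sigma rho omega (boost d' (eps * k.+1%:R) *m h) f)) ->
  P (sigma rho omega (boost d' z0 *m h) f).
Proof.
move=> affP Lh fs eps0 z00 Pk; have [N LN] := sigma_boost_laurent Lh fs.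
apply: (@affine_closed_laurent _ _ P affP N (fun k => eps * k.+1%:R)
  (fun z => sigma rho omega (boost d' z *m h) f)) => //.
- by move=> a b /(mulfI eps0) /eqP; rewrite eqr_nat => /eqP [].
- by move=> k; rewrite mulf_neq0 // pnatr_eq0.
Qed.

End SigmaLaurent.

Section FormalAlgebra.
Variables (C : numClosedFieldType) (d n : nat).
Local Notation kelt := (kelt C d n).
Local Notation letter := (letter d n).

Lemma size_seqs_of_len k (s : seq 'I_d) : s \in seqs_of_len d k -> size s = k.
Proof.
elim: k s => [|k IH] s /=; first by rewrite inE => /eqP ->.
by case/allpairsP => -[i t] /= [_ ts ->] /=; rewrite (IH t).
Qed.

Lemma mem_seqs_of_len (s : seq 'I_d) : s \in seqs_of_len d (size s).
Proof.
elim: s => [|i s IH] /=; first by rewrite inE.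
by apply: (allpairs_f (fun i s => i :: s)); rewrite ?mem_enum.
Qed.

Lemma uniq_seqs_of_len k : uniq (seqs_of_len d k).
Proof.
elim: k => [|k IH] //=; apply: allpairs_uniq => //; first exact: enum_uniq.
by move=> [a b] [c e] _ _ /= [-> ->].
Qed.

Lemma size_letters_of_len k (y : letter) : y \in letters_of_len d n k -> size y.2 = k.
Proof. by case/allpairsP => -[b s] /= [_ hs ->] /=; apply: size_seqs_of_len. Qed.

Lemma mem_letters_of_len (y : letter) : y \in letters_of_len d n (size y.2).
Proof.
by case: y => b s /=; apply: (allpairs_f pair); rewrite ?mem_enum ?mem_seqs_of_len.
Qed.

Lemma uniq_letters_of_len k : uniq (letters_of_len d n k).
Proof.
apply: allpairs_uniq; [exact: enum_uniq | exact: uniq_seqs_of_len |].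
by move=> [a b] [c e] _ _ /= [-> ->].
Qed.

Lemma mem_same_shape (w : seq letter) : w \in same_shape w.
Proof.
elim: w => [|x w IH] /=; first by rewrite inE.
by apply: (allpairs_f (fun y v => y :: v)) => //; apply: mem_letters_of_len.
Qed.

Lemma uniq_same_shape (w : seq letter) : uniq (same_shape w).
Proof.
elim: w => [|x w IH] //=; apply: allpairs_uniq => //; first exact: uniq_letters_of_len.
by move=> [a b] [c e] _ _ /= [-> ->].
Qed.

Lemma prod_zip_eq (T : eqType) (s t : seq T) : size s = size t ->
  \prod_(p <- zip s t) ((p.1 == p.2)%:R : C) = (s == t)%:R.
Proof.
elim: s t => [|a s IH] [|b t] //=; first by rewrite big_nil.
by move=> [st]; rewrite big_cons IH // eqseq_cons; case: (a == b); rewrite ?mul1r ?mul0r.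
Qed.

Lemma sigma1 (rho : 'M[C]_d -> 'M[C]_n) (omega : 'M[C]_d -> 'M[C]_d) (f : kelt) :
  holo_ext_rep rho -> holo_ext_rep omega -> sigma rho omega 1%:M f = f.
Proof.
case=> rho1 _ _ _ [omega1 _ _ _]; apply: functional_extensionality => w.
rewrite /sigma /alg_map /= invmx1 rho1 omega1.
have delta u : u \in same_shape w ->
    \prod_(p <- zip w u) ((1%:M : 'M[C]_n) p.2.1 p.1.1 *
      \prod_(q <- zip p.1.2 p.2.2) (1%:M : 'M[C]_d) q.1 q.2) = (w == u)%:R.
  elim: w {f} u => [|[a s] w IH] u /=; first by rewrite inE => /eqP ->; rewrite big_nil.
  case/allpairsP => -[[b t] v] /= [/size_letters_of_len /= st vw ->] /=.
  rewrite big_cons IH //; under eq_bigr do rewrite mxE.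
  rewrite prod_zip_eq // mxE eqseq_cons xpair_eqE [b == a]eq_sym.
  by case: (a == b); case: (s == t); case: (w == v); rewrite /= ?mul1r ?mul0r ?mulr0.
rewrite (bigD1_seq w) ?mem_same_shape ?uniq_same_shape //= delta ?mem_same_shape //.
rewrite eqxx mulr1 big1_seq ?addr0 // => u /andP [uw us].
by rewrite delta // eq_sym (negbTE uw) mulr0.
Qed.

Lemma cfft_affine (Dc : kelt -> Prop) :
  affine_subspace_Fc Dc -> affine_closed (cfft Dc).
Proof.
move=> [_ affDc] h1 h2 t [[s1 hs1] D1] [[s2 hs2] D2]; split.
  exists (s1 ++ s2) => w; rewrite mem_cat negb_or => /andP [w1 w2].
  by rewrite hs1 // hs2 // !mulr0 addr0.
suff -> : cmap (fun u => (1 - t) * h1 u + t * h2 u) =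
          (fun u => (1 - t) * cmap h1 u + t * cmap h2 u) by apply: affDc.
by apply: functional_extensionality => u; rewrite /cmap big_split /= !mulr_sumr.
Qed.

Lemma affine_closed_Cdollar (Dc : kelt -> Prop) anti dollar :
  affine_subspace_Fc Dc -> affine_closed (fun f => cfft Dc (Cdollar anti dollar f)).
Proof.
move=> affDc h1 h2 t D1 D2.
have -> : Cdollar anti dollar (fun u => (1 - t) * h1 u + t * h2 u) =
    (fun w => (1 - (if anti then t^* else t)) * Cdollar anti dollar h1 w +
              (if anti then t^* else t) * Cdollar anti dollar h2 w).
  apply: functional_extensionality => w; rewrite /Cdollar /alg_map !mulr_sumr -big_split.
  apply: eq_bigr => u _ /=; case: anti {D1 D2}; last by rewrite mulrDl !mulrA.
  by rewrite rmorphD !rmorphM rmorphB rmorph1 mulrDl !mulrA.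
exact: cfft_affine.
Qed.

Lemma SantiK : involutive (@Santi C d n).
Proof. by move=> f; apply: functional_extensionality => w; rewrite /Santi revK. Qed.

(* [S] only reverses words, which is invisible in the commutative quotient. *)
Lemma Santi_preserves (Dc : kelt -> Prop) : preserves (@Santi C d n) (cfft Dc).
Proof.
move=> f [[s fs] Df]; split.
  exists (map rev s) => w ws; rewrite /Santi fs //; apply: contra ws => rws.
  by rewrite -(revK w) map_f.
suff -> : cmap (Santi f) = cmap f by [].
apply: functional_extensionality => u; rewrite /cmap /Santi -(big_map rev xpredT f).
apply: perm_big; apply: uniq_perm.
- by rewrite map_inj_uniq ?permutations_uniq //; apply: (can_inj revK).
- exact: permutations_uniq.
move=> v; rewrite mem_permutations -{1}(revK v) (mem_map (can_inj revK)).
by rewrite mem_permutations perm_rev.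
Qed.

Lemma preserves_dagger_Cdollar (Dc : kelt -> Prop) anti dollar :
  preserves (dagger anti dollar) (cfft Dc) <-> preserves (Cdollar anti dollar) (cfft Dc).
Proof.
split=> pres f Df; last by apply: Santi_preserves; apply: pres.
by rewrite -(SantiK (Cdollar anti dollar f)); apply: Santi_preserves; apply: pres.
Qed.

End FormalAlgebra.

Unset Implicit Arguments.
Set Strict Implicit.

Theorem theorem3 (C : numClosedFieldType) (d n : nat) (hd : (3 <= d)%N)
    (rho : 'M[C]_d -> 'M[C]_n) (omega : 'M[C]_d -> 'M[C]_d)
    (hrho : holo_ext_rep rho) (homega : holo_ext_rep omega)
    (anti : bool) (dollar : 'rV[C]_n -> 'rV[C]_n)
    (hdol_add : forall x y, dollar (x + y) = dollar x + dollar y)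
    (hdol_sl : forall (z : C) x, dollar (z *: x) = (if anti then z^* else z) *: dollar x)
    (hdol_inv : forall x, dollar (dollar x) = x)
    (Dc : kelt C d n -> Prop) (hDc : affine_subspace_Fc Dc)
    (hinv : forall g, Lup g -> preserves (sigma rho omega g) (cfft Dc)) :
  (forall g, Ldown g ->
     preserves (fun f => Cdollar anti dollar (sigma rho omega g f)) (cfft Dc))
  <-> preserves (dagger anti dollar) (cfft Dc).
Proof.
have [d' e] : exists d', d = (2 + d')%N by exists (d - 2)%N; lia.
subst d.
have N1_neq0 : (-1 : C) != 0 by rewrite oppr_eq0 oner_eq0.
rewrite preserves_dagger_Cdollar; split => [Hdown f Df | HC g gdown f Df].
- have affCD := affine_closed_Cdollar (anti := anti) (dollar := dollar) hDc.
  have := sigma_boost_interpolation hrho homega affCD (LC1 _ _) Df.1 N1_neq0 (oner_neq0 C).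
  rewrite boost1 mulmx1 sigma1 //; apply=> k; rewrite mulmx1.
  by apply: Hdown Df; apply: Ldown_boost; rewrite mulN1r oppr_lt0 ltr0n.
- have gup := Lup_boostN1Ml gdown; apply: HC; rewrite -(boostN1K g).
  apply: (sigma_boost_interpolation hrho homega (cfft_affine hDc) gup.1.1 Df.1
    (oner_neq0 C) N1_neq0) => k.
  by apply: hinv Df; apply: Lup_boostMl gup; rewrite mul1r ltr0n.
Qed.
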